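(* Let $K\in\mathbb N$ and let $d_2,\dots,d_{K+1}$ be real numbers. Suppose there exist constants $a,b,c>0$ such that $$d_{k+1}\le\frac ak+b(1+\log k)+c\sum_{\ell=2}^k\frac{d_\ell}{k-\ell+2}\quad\text{for all }k\in[K].$$ Then $$d_{k+1}\le\left(\frac ak+b(1+\log k)\right)\sum_{i=0}^{k-1}\big(2c(1+\log k)\big)^i\quad\text{for all }k\in[K].$$
   Context: $\log$ is the natural logarithm; $[K]=\{1,\dots,K\}$; an empty sum equals $0$. *)

From Stdlib Require Import Reals List.
Open Scope R_scope.

(* sumR m n f = sum_{l = m}^{n} f l ; empty sum (n < m) is 0. *)
Definition sumR (m n : nat) (f : nat -> R) : R :=
  fold_right Rplus 0 (map f (seq m (S n - m))).

From Stdlib Require Import Reals List Lra Lia Psatz.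
Open Scope R_scope.

(* Strong induction on k, writing f(k) = a/k + b(1 + ln k) ([source]).  For l <= k the
   inductive bound on d_l may be weakened to f(l-1) S, where S is the geometric sum of
   length k - 1 with the larger ratio r = 2c(1 + ln k).  The remaining convolution
   sum_l f(l-1)/(k-l+2) is at most 2(1 + ln k) f(k), since both sum_l 1/(l-1) and
   sum_l 1/(k-l+2) are at most 1 + ln k by 1/(x+1) <= ln(x+1) - ln x.  Hence
   d_(k+1) <= f(k) (1 + r S), which is the geometric sum of length k. *)

Lemma ln_le x y : 0 < x -> x <= y -> ln x <= ln y.
Proof.
  intros Hx Hxy; destruct (Rle_lt_or_eq_dec x y Hxy) as [Hlt | ->].
  - now left; apply ln_increasing.
  - now right.
Qed.

Lemma ln_le_sub1 y : 0 < y -> ln y <= y - 1.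
Proof.
  intros Hy; rewrite <- (ln_exp (y - 1)); apply ln_le; [exact Hy|].
  pose proof (exp_ineq1_le (y - 1)); lra.
Qed.

Lemma inv_succ_le_ln_diff x : 0 < x -> 1 / (x + 1) <= ln (x + 1) - ln x.
Proof.
  intros Hx.
  assert (Hq : 0 < x / (x + 1)) by (apply Rdiv_lt_0_compat; lra).
  assert (Hln : ln x = ln (x + 1) + ln (x / (x + 1))).
  { rewrite <- ln_mult by lra; f_equal; field; lra. }
  pose proof (ln_le_sub1 _ Hq) as Hsub.
  replace (x / (x + 1) - 1) with (- (1 / (x + 1))) in Hsub by (field; lra).
  lra.
Qed.

Lemma ln_INR_nonneg n : (1 <= n)%nat -> 0 <= ln (INR n).
Proof. intros Hn; rewrite <- ln_1; apply ln_le; [lra | now apply (le_INR 1)]. Qed.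

Lemma ln_INR_le m n : (1 <= m <= n)%nat -> ln (INR m) <= ln (INR n).
Proof. intros Hmn; apply ln_le; [apply lt_0_INR | apply le_INR]; lia. Qed.

Section SumR.

Implicit Types (f g : nat -> R) (m n : nat).

Lemma sumR_nil m n f : (n < m)%nat -> sumR m n f = 0.
Proof. intros; unfold sumR; now replace (S n - m)%nat with 0%nat by lia. Qed.

Lemma sumR_cons m n f : (m <= n)%nat -> sumR m n f = f m + sumR (S m) n f.
Proof. intros; unfold sumR; now replace (S n - m)%nat with (S (S n - S m)) by lia. Qed.

Lemma sumR_snoc m n f : (m <= S n)%nat -> sumR m (S n) f = sumR m n f + f (S n).
Proof.
  intros; unfold sumR.
  replace (S (S n) - m)%nat with (S (S n - m)) by lia.
  rewrite seq_S, map_app, fold_right_app; cbn [map fold_right].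
  replace (m + (S n - m))%nat with (S n) by lia.
  induction (map f (seq m (S n - m))) as [|x s IH]; cbn [fold_right]; lra.
Qed.

Lemma sumR_le m n f g : (forall l, (m <= l <= n)%nat -> f l <= g l) ->
  sumR m n f <= sumR m n g.
Proof.
  intros Hfg; unfold sumR.
  assert (Hin : forall l, In l (seq m (S n - m)) -> f l <= g l)
    by (intros l Hl; apply in_seq in Hl; apply Hfg; lia).
  induction (seq m (S n - m)) as [|x s IH]; simpl; [lra|].
  apply Rplus_le_compat; [apply Hin; now left | apply IH; intros; apply Hin; now right].
Qed.

Lemma sumR_scal m n f c : sumR m n (fun l => c * f l) = c * sumR m n f.
Proof. unfold sumR; induction (seq m (S n - m)); simpl; [|rewrite IHl]; lra. Qed.

Lemma sumR_add m n f g : sumR m n (fun l => f l + g l) = sumR m n f + sumR m n g.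
Proof. unfold sumR; induction (seq m (S n - m)); simpl; [|rewrite IHl]; lra. Qed.

Lemma sumR_telescope m n g : (m <= S n)%nat ->
  sumR m n (fun l => g (S l) - g l) = g (S n) - g m.
Proof.
  intros Hmn; unfold sumR.
  replace (S n) with (m + (S n - m))%nat at 2 by lia.
  clear Hmn; generalize (S n - m)%nat; intros len; revert m; induction len as [|len IH]; intros m.
  - rewrite Nat.add_0_r; simpl; lra.
  - simpl; rewrite IH, Nat.add_succ_r; simpl; lra.
Qed.

Lemma sumR_le_extend m n n' f : (forall l, 0 <= f l) -> (m <= S n)%nat -> (n <= n')%nat ->
  sumR m n f <= sumR m n' f.
Proof.
  intros Hf Hm Hn; replace n' with (n + (n' - n))%nat by lia.
  induction (n' - n)%nat as [|p IH].
  - rewrite Nat.add_0_r; lra.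
  - rewrite Nat.add_succ_r, sumR_snoc by lia; specialize (Hf (S (n + p))); lra.
Qed.

End SumR.

Definition geom (r : R) (n : nat) : R := sumR 0 n (fun i => r ^ i).

Lemma geom_succ r n : geom r (S n) = 1 + r * geom r n.
Proof.
  unfold geom; induction n as [|n IH].
  - rewrite sumR_snoc, sumR_cons, sumR_nil by lia; simpl; ring.
  - rewrite sumR_snoc by lia; rewrite IH at 1; rewrite (sumR_snoc 0 n) by lia; simpl; ring.
Qed.

Lemma geom_le r s m n : 0 <= r <= s -> (m <= n)%nat -> geom r m <= geom s n.
Proof.
  intros Hrs Hmn; unfold geom.
  apply Rle_trans with (sumR 0 m (fun i => s ^ i)).
  - apply sumR_le; intros i _; now apply pow_incr.
  - apply sumR_le_extend; [intros i; apply pow_le; lra | lia | exact Hmn].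
Qed.

Lemma geom_ge1 r n : 0 <= r -> 1 <= geom r n.
Proof.
  intros Hr; replace 1 with (geom r 0) by (unfold geom; rewrite sumR_cons, sumR_nil by lia; simpl; ring).
  apply geom_le; [lra | lia].
Qed.

Definition harm_ub (k : nat) : R := 1 + ln (INR k).

Lemma harm_ub_le m n : (1 <= m <= n)%nat -> harm_ub m <= harm_ub n.
Proof. intros Hmn; unfold harm_ub; pose proof (ln_INR_le m n Hmn); lra. Qed.

Lemma harm_ub_ge1 n : (1 <= n)%nat -> 1 <= harm_ub n.
Proof. intros Hn; unfold harm_ub; pose proof (ln_INR_nonneg n Hn); lra. Qed.

Lemma inv_INR_succ_le_ln_diff n : (1 <= n)%nat ->
  1 / INR (S n) <= ln (INR (S n)) - ln (INR n).
Proof. intros Hn; rewrite S_INR; apply inv_succ_le_ln_diff, lt_0_INR; lia. Qed.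

Lemma harmonic_pred_le k : (2 <= k)%nat -> sumR 2 k (fun l => 1 / INR (l - 1)) <= harm_ub k.
Proof.
  intros Hk; rewrite sumR_cons by lia.
  assert (Htail : sumR 3 k (fun l => 1 / INR (l - 1))
                  <= sumR 3 k (fun l => ln (INR (S l - 2)) - ln (INR (l - 2)))).
  { apply sumR_le; intros l Hl.
    replace (S l - 2)%nat with (S (l - 2)) by lia; replace (l - 1)%nat with (S (l - 2)) by lia.
    apply inv_INR_succ_le_ln_diff; lia. }
  rewrite (sumR_telescope 3 k (fun l => ln (INR (l - 2)))) in Htail by lia.
  replace (S k - 2)%nat with (k - 1)%nat in Htail by lia.
  pose proof (ln_INR_le (k - 1) k ltac:(lia)).
  unfold harm_ub; simpl in *; rewrite ln_1 in Htail; lra.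
Qed.

Lemma harmonic_rev_le_ln k : (1 <= k)%nat -> sumR 2 k (fun l => 1 / INR (k - l + 2)) <= ln (INR k).
Proof.
  intros Hk.
  apply Rle_trans with (sumR 2 k (fun l => - ln (INR (k + 2 - S l)) - - ln (INR (k + 2 - l)))).
  - apply sumR_le; intros l Hl; cbv beta.
    replace (k - l + 2)%nat with (S (k + 2 - S l)) by lia.
    replace (k + 2 - l)%nat with (S (k + 2 - S l)) by lia.
    pose proof (inv_INR_succ_le_ln_diff (k + 2 - S l) ltac:(lia)); lra.
  - rewrite (sumR_telescope 2 k (fun l => - ln (INR (k + 2 - l)))) by lia.
    replace (k + 2 - S k)%nat with 1%nat by lia; replace (k + 2 - 2)%nat with k by lia.
    simpl; rewrite ln_1; lra.
Qed.

Section Recursion.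

Variables (a b c : R).
Hypotheses (ha : 0 <= a) (hb : 0 <= b) (hc : 0 <= c).

Definition source (k : nat) : R := a / INR k + b * harm_ub k.

Definition ratio (k : nat) : R := 2 * c * harm_ub k.

Lemma source_nonneg k : (1 <= k)%nat -> 0 <= source k.
Proof.
  intros Hk; unfold source.
  assert (0 <= a / INR k) by (apply Rle_mult_inv_pos; [lra | apply lt_0_INR; lia]).
  pose proof (harm_ub_ge1 k Hk); nra.
Qed.

(* Splitting [1/(j m) = (1/j + 1/m)/(j + m)] moves the weight [1/j] of [a/j] onto
   the fixed denominator [j + m = k + 1]. *)
Lemma source_div_le j m k : (1 <= j <= k)%nat -> (1 <= m)%nat -> (j + m = S k)%nat ->
  source j / INR m
  <= a / INR (S k) * (1 / INR j + 1 / INR m) + b * harm_ub k * (1 / INR m).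
Proof.
  intros Hj Hm Hjm.
  assert (Hj0 : 0 < INR j) by (apply lt_0_INR; lia).
  assert (Hm0 : 0 < INR m) by (apply lt_0_INR; lia).
  assert (HSk : INR (S k) = INR j + INR m) by (rewrite <- Hjm, plus_INR; reflexivity).
  assert (Hsplit : source j / INR m
                   = a / INR (S k) * (1 / INR j + 1 / INR m) + b * harm_ub j * (1 / INR m))
    by (unfold source; rewrite HSk; field; lra).
  rewrite Hsplit; apply Rplus_le_compat_l, Rmult_le_compat_r.
  - apply Rlt_le, Rdiv_lt_0_compat; lra.
  - apply Rmult_le_compat_l; [exact hb | now apply harm_ub_le].
Qed.

Lemma convolution_source_le k : (2 <= k)%nat ->
  sumR 2 k (fun l => source (l - 1) / INR (k - l + 2)) <= 2 * harm_ub k * source k.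
Proof.
  intros Hk.
  set (p := a / INR (S k)); set (L := harm_ub k).
  set (A := sumR 2 k (fun l => 1 / INR (l - 1))).
  set (B := sumR 2 k (fun l => 1 / INR (k - l + 2))).
  assert (Hsum : sumR 2 k (fun l => source (l - 1) / INR (k - l + 2)) <= p * (A + B) + b * L * B).
  { apply Rle_trans with
      (sumR 2 k (fun l => p * (1 / INR (l - 1) + 1 / INR (k - l + 2)) + b * L * (1 / INR (k - l + 2)))).
    - apply sumR_le; intros l Hl; apply source_div_le; lia.
    - rewrite sumR_add, !sumR_scal, sumR_add; unfold A, B; lra. }
  assert (HA : A <= L) by now apply harmonic_pred_le.
  assert (HB : B <= L) by (pose proof (harmonic_rev_le_ln k ltac:(lia)); unfold B, L, harm_ub; lra).
  assert (HL : 1 <= L) by (apply harm_ub_ge1; lia).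
  assert (Hp : 0 <= p <= a / INR k).
  { unfold p; split.
    - apply Rle_mult_inv_pos; [lra | apply lt_0_INR; lia].
    - apply Rmult_le_compat_l; [lra|]; apply Rinv_le_contravar; [apply lt_0_INR; lia | apply le_INR; lia]. }
  apply (Rle_trans _ _ _ Hsum); unfold source; fold L.
  assert (p * (A + B) <= p * (2 * L)) by (apply Rmult_le_compat_l; lra).
  assert (p * (2 * L) <= a / INR k * (2 * L)) by (apply Rmult_le_compat_r; lra).
  assert (b * L * B <= b * L * L) by (apply Rmult_le_compat_l; nra).
  assert (0 <= b * L * L) by (apply Rmult_le_pos; nra).
  lra.
Qed.

Variable d : nat -> R.

Lemma bound_step k : (1 <= k)%nat ->
  d (S k) <= source k + c * sumR 2 k (fun l => d l / INR (k - l + 2)) ->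
  (forall j, (1 <= j < k)%nat -> d (S j) <= source j * geom (ratio j) (j - 1)) ->
  d (S k) <= source k * geom (ratio k) (k - 1).
Proof.
  intros Hk Hrec IH.
  destruct (Nat.eq_dec k 1) as [->|Hk2].
  { rewrite sumR_nil in Hrec by lia.
    unfold geom; rewrite sumR_cons, sumR_nil by lia; simpl in *; lra. }
  set (S' := geom (ratio k) (k - 2)).
  assert (Hr : 0 <= ratio k) by (unfold ratio; pose proof (harm_ub_ge1 k Hk); nra).
  assert (HS' : 0 <= S') by (pose proof (geom_ge1 (ratio k) (k - 2) Hr); unfold S'; lra).
  assert (Hterm : forall l, (2 <= l <= k)%nat ->
            d l / INR (k - l + 2) <= S' * (source (l - 1) / INR (k - l + 2))).
  { intros l Hl.
    replace l with (S (l - 1)) at 1 by lia.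
    assert (HG : geom (ratio (l - 1)) (l - 1 - 1) <= S').
    { apply geom_le; [|lia]; unfold ratio; split.
      - pose proof (harm_ub_ge1 (l - 1) ltac:(lia)); nra.
      - pose proof (harm_ub_le (l - 1) k ltac:(lia)); nra. }
    pose proof (IH (l - 1)%nat ltac:(lia)) as Hd.
    pose proof (source_nonneg (l - 1) ltac:(lia)).
    assert (Hm : 0 < / INR (k - l + 2)) by (apply Rinv_0_lt_compat, lt_0_INR; lia).
    unfold Rdiv; rewrite <- Rmult_assoc, (Rmult_comm S'); apply Rmult_le_compat_r; [lra|].
    apply Rle_trans with (1 := Hd); now apply Rmult_le_compat_l. }
  assert (Hconv : sumR 2 k (fun l => d l / INR (k - l + 2)) <= S' * (2 * harm_ub k * source k)).
  { apply Rle_trans with (sumR 2 k (fun l => S' * (source (l - 1) / INR (k - l + 2)))).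
    - exact (sumR_le _ _ _ _ Hterm).
    - rewrite sumR_scal; apply Rmult_le_compat_l; [exact HS'|].
      apply convolution_source_le; lia. }
  replace (k - 1)%nat with (S (k - 2)) by lia; rewrite geom_succ; fold S'.
  assert (c * sumR 2 k (fun l => d l / INR (k - l + 2)) <= c * (S' * (2 * harm_ub k * source k)))
    by (apply Rmult_le_compat_l; assumption).
  unfold ratio; lra.
Qed.

End Recursion.

Theorem mainTheorem14 (K : nat) (d : nat -> R) (a b c : R)
  (ha : 0 < a) (hb : 0 < b) (hc : 0 < c)
  (hrec : forall k : nat, (1 <= k <= K)%nat ->
     d (S k) <= a / INR k + b * (1 + ln (INR k))
                + c * sumR 2 k (fun l => d l / INR (k - l + 2))) :
  forall k : nat, (1 <= k <= K)%nat ->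
    d (S k) <= (a / INR k + b * (1 + ln (INR k)))
               * sumR 0 (k - 1) (fun i => (2 * c * (1 + ln (INR k))) ^ i).
Proof.
  assert (Hbound : forall n k, (k <= n)%nat -> (1 <= k <= K)%nat ->
            d (S k) <= source a b k * geom (ratio c k) (k - 1)).
  { induction n as [|n IH]; intros k Hkn Hk; [lia|].
    apply (bound_step a b c (Rlt_le _ _ ha) (Rlt_le _ _ hb) (Rlt_le _ _ hc) d k); [lia | |].
    - exact (hrec k Hk).
    - intros j Hj; apply IH; lia. }
  intros k Hk; exact (Hbound k k (le_n k) Hk).
Qed.
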